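(* Let $\mathcal{A}=\{f\in C^\infty(]0,1[,]0,1[)\mid \lim_{x\to1}f(x)=1,\ \lim_{x\to0}f(x)=0\}$ and $\mathcal{D}=\{f\in\mathcal{A}\mid \inf_{x\in]0,1[}f'(x)>0 \text{ and } \sup_{x\in]0,1[}f'(x)>0\}$. Let $P\in\mathbb{R}[x]$ be a polynomial with $P(0)=P(1)=0$, $0<P(x)<\min(x,1-x)$ for all $x\in]0,1[$, and $\sup_{x\in]0,1[}|P'(x)|<1$. Define $\varphi(t,x)=\frac{P(x)t}{(1-P(x))t+P(x)}$ and $c_t(x)=x+\varphi(t,x)$ for $t\ge0$, $c_t(x)=x-\varphi(-t,x)$ for $t<0$. Then $c_t\in\mathcal{D}$ for all $t\in[0,1]$. *)

From Stdlib Require Import Reals List.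
From Coquelicot Require Import Coquelicot.
Open Scope R_scope.

(* Polynomial with coefficient list [a0; a1; ...; an] (constant term first). *)
Definition poly_eval (l : list R) (x : R) : R :=
  fold_right (fun a acc => a + x * acc) 0 l.

Definition in_open01 (x : R) : Prop := 0 < x < 1.

Definition smooth_on01 (f : R -> R) : Prop :=
  forall n x, in_open01 x -> ex_derive_n f n x.

(* The class A: smooth maps ]0,1[ -> ]0,1[ with lim_{x->1} f = 1, lim_{x->0} f = 0.
   (f is a total function on R; only its values on ]0,1[ matter.) *)
Definition classA (f : R -> R) : Prop :=
  smooth_on01 f /\
  (forall x, in_open01 x -> 0 < f x < 1) /\
  filterlim f (at_left 1) (locally 1) /\
  filterlim f (at_right 0) (locally 0).

Definition inf01 (g : R -> R) : Rbar :=
  Glb_Rbar (fun y => exists x, in_open01 x /\ y = g x).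
Definition sup01 (g : R -> R) : Rbar :=
  Lub_Rbar (fun y => exists x, in_open01 x /\ y = g x).

Definition classD (f : R -> R) : Prop :=
  classA f /\
  Rbar_lt (Finite 0) (inf01 (Derive f)) /\
  Rbar_lt (Finite 0) (sup01 (Derive f)).

Definition phi (P : R -> R) (t x : R) : R :=
  P x * t / ((1 - P x) * t + P x).

Definition ct (P : R -> R) (t : R) (x : R) : R :=
  if Rle_dec 0 t then x + phi P t x else x - phi P (- t) x.

(* On ]0,1[ the polynomial satisfies 0 < P x < min(x, 1 - x), so for t in [0,1]
   the denominator D = (1 - P x) t + P x of phi lies in [t, 1]; hence
   0 <= phi(t,x) <= P x, which squeezes c_t x between x and min(1, 2x) and gives
   both boundary limits.  Differentiating, c_t' = 1 + P' t^2 / D^2 with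
   0 <= t^2 / D^2 <= 1, so c_t' >= 1 - sup |P'| > 0.  Smoothness holds because
   c_t is a rational function of x whose denominator does not vanish on ]0,1[. *)
From Stdlib Require Import Reals Lra.
From Coquelicot Require Import Coquelicot.
Open Scope R_scope.

Section Smoothness.

Variable U : R -> Prop.
Hypothesis U_open : open U.

(* Unlike [ex_derive_n], every iterate of [Derive] is required to be differentiable
   on all of U, which makes the class closed under products and inverses. *)
Fixpoint Cn_on (n : nat) (f : R -> R) : Prop :=
  match n with
  | O => True
  | S m => (forall x, U x -> ex_derive f x) /\ Cn_on m (Derive f)
  end.

Lemma Cn_on_ext n : forall f g,
  (forall x, U x -> f x = g x) -> Cn_on n f -> Cn_on n g.
Proof.
  induction n as [|n IH]; simpl; auto.
  intros f g Efg [Hf Hf']; split.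
  - intros x Hx. apply ex_derive_ext_loc with f; [|auto].
    apply filter_imp with U; [auto | apply U_open; auto].
  - apply IH with (Derive f); auto.
    intros x Hx. apply Derive_ext_loc.
    apply filter_imp with U; [auto | apply U_open; auto].
Qed.

Lemma Cn_on_S n : forall f, Cn_on (S n) f -> Cn_on n f.
Proof.
  induction n as [|n IH]; simpl; auto.
  intros f [Hf Hf']; split; auto.
Qed.

Lemma Cn_on_const n : forall a, Cn_on n (fun _ => a).
Proof.
  induction n as [|n IH]; simpl; auto.
  intros a; split.
  - intros; apply ex_derive_const.
  - apply Cn_on_ext with (fun _ => 0); auto.
    intros; rewrite Derive_const; auto.
Qed.

Lemma Cn_on_id n : Cn_on n (fun x => x).
Proof.
  destruct n; simpl; auto. split.
  - intros; apply ex_derive_id.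
  - apply Cn_on_ext with (fun _ => 1); [|apply Cn_on_const].
    intros; symmetry; apply Derive_id.
Qed.

Lemma Cn_on_plus n : forall f g,
  Cn_on n f -> Cn_on n g -> Cn_on n (fun x => f x + g x).
Proof.
  induction n as [|n IH]; simpl; auto.
  intros f g [Hf Hf'] [Hg Hg']; split.
  - intros; apply (ex_derive_plus f g); auto.
  - apply Cn_on_ext with (fun x => Derive f x + Derive g x).
    + intros; rewrite Derive_plus; auto.
    + apply IH; auto.
Qed.

Lemma Cn_on_mult n : forall f g,
  Cn_on n f -> Cn_on n g -> Cn_on n (fun x => f x * g x).
Proof.
  induction n as [|n IH]; auto.
  intros f g Cf Cg.
  pose proof (Cn_on_S _ _ Cf) as Cf_n; pose proof (Cn_on_S _ _ Cg) as Cg_n.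
  destruct Cf as [Hf Hf']; destruct Cg as [Hg Hg']; split.
  - intros; apply ex_derive_mult; auto.
  - apply Cn_on_ext with (fun x => Derive f x * g x + f x * Derive g x).
    + intros; rewrite Derive_mult; auto.
    + apply Cn_on_plus; apply IH; auto.
Qed.

Lemma Cn_on_inv n : forall f,
  Cn_on n f -> (forall x, U x -> f x <> 0) -> Cn_on n (fun x => / f x).
Proof.
  induction n as [|n IH]; auto.
  intros f Cf f_neq0.
  pose proof (Cn_on_S _ _ Cf) as Cf_n.
  destruct Cf as [Hf Hf']; split.
  - intros; apply ex_derive_inv; auto.
  - apply Cn_on_ext with (fun x => (-1) * Derive f x * (/ f x * / f x)).
    + intros x Hx. rewrite Derive_inv; auto.
      specialize (f_neq0 x Hx). field; auto.
    + apply Cn_on_mult; [apply Cn_on_mult; [apply Cn_on_const | auto] |].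
      apply Cn_on_mult; apply IH; auto.
Qed.

Lemma Cn_on_poly_eval n l : Cn_on n (poly_eval l).
Proof.
  induction l as [|a l IH].
  - apply (Cn_on_const n 0).
  - apply (Cn_on_plus n (fun _ => a) (fun x => x * poly_eval l x));
      [apply Cn_on_const |].
    apply Cn_on_mult; [apply Cn_on_id | auto].
Qed.

Lemma Cn_on_ex_derive_n n : forall f x, Cn_on n f -> U x -> ex_derive_n f n x.
Proof.
  induction n as [|n IH]; simpl; auto.
  intros f x [Hf Hf'] Hx. destruct n as [|n]; simpl; auto.
  apply ex_derive_ext with (Derive_n (Derive f) n); [| apply (IH _ _ Hf' Hx)].
  intros y. rewrite (Derive_n_comp f n 1), Nat.add_1_r. reflexivity.
Qed.

End Smoothness.

Lemma open_in_open01 : open in_open01.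
Proof. apply open_and; [apply open_gt | apply open_lt]. Qed.

Lemma sup01_lt_bound g a : Rbar_lt (sup01 g) (Finite a) ->
  exists s, s < a /\ forall x, in_open01 x -> g x <= s.
Proof.
  unfold sup01; intros Hlt.
  destruct (Lub_Rbar_correct (fun y => exists x, in_open01 x /\ y = g x)) as [Hub _].
  destruct (Lub_Rbar _) as [s| |]; simpl in Hlt; try contradiction.
  - exists s; split; auto.
    intros x Hx. apply (Hub (g x)). eauto.
  - exfalso. apply (Hub (g (/2))). exists (/2); split; [split; lra | auto].
Qed.

Lemma le_sup01 g x : in_open01 x -> Rbar_le (Finite (g x)) (sup01 g).
Proof.
  intros Hx. unfold sup01.
  destruct (Lub_Rbar_correct (fun y => exists x, in_open01 x /\ y = g x)) as [Hub _].
  apply Hub. eauto.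
Qed.

Lemma inf01_ge g m : (forall x, in_open01 x -> m <= g x) ->
  Rbar_le (Finite m) (inf01 g).
Proof.
  intros Hm. unfold inf01.
  destruct (Glb_Rbar_correct (fun y => exists x, in_open01 x /\ y = g x)) as [_ Hglb].
  apply Hglb. intros y [x [Hx ->]]. apply Hm; auto.
Qed.

Lemma filterlim_at_left1_of_bounds f :
  (forall x, in_open01 x -> x <= f x <= 1) -> filterlim f (at_left 1) (locally 1).
Proof.
  intros Hf.
  apply (filterlim_le_le (fun x => x) f (fun _ => 1) (Finite 1)).
  - exists (mkposreal 1 Rlt_0_1). intros y Hy Hy1.
    apply Hf. change (Rabs (y - 1) < 1) in Hy.
    apply Rabs_lt_between in Hy. split; lra.
  - apply (filterlim_filter_le_1 (F := locally 1));
      [apply filter_le_within | apply filterlim_id].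
  - apply filterlim_const.
Qed.

Lemma filterlim_at_right0_of_bounds f :
  (forall x, in_open01 x -> 0 <= f x <= 2 * x) -> filterlim f (at_right 0) (locally 0).
Proof.
  intros Hf.
  apply (filterlim_le_le (fun _ => 0) f (fun x => 2 * x) (Finite 0)).
  - exists (mkposreal 1 Rlt_0_1). intros y Hy Hy0.
    apply Hf. change (Rabs (y - 0) < 1) in Hy.
    apply Rabs_lt_between in Hy. split; lra.
  - apply filterlim_const.
  - assert (Hlin : filterlim (fun x => 2 * x) (locally 0) (locally (2 * 0))).
    { apply (continuous_mult (fun _ => 2) (fun x => x));
        [apply continuous_const | apply continuous_id]. }
    rewrite Rmult_0_r in Hlin.
    apply (filterlim_filter_le_1 (F := locally 0)); [apply filter_le_within | exact Hlin].
Qed.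

Lemma ct_nonneg P t x : 0 <= t -> ct P t x = x + phi P t x.
Proof. intros Ht. unfold ct. destruct (Rle_dec 0 t); [reflexivity | lra]. Qed.

Lemma phi_denom_bounds p t : 0 < p <= 1 -> 0 <= t <= 1 ->
  0 < (1 - p) * t + p /\ t <= (1 - p) * t + p.
Proof. intros Hp Ht. split; nra. Qed.

Lemma phi_bounds P t x : 0 < P x <= 1 -> 0 <= t <= 1 -> 0 <= phi P t x <= P x.
Proof.
  intros Hp Ht. unfold phi.
  destruct (phi_denom_bounds (P x) t Hp Ht) as [D_pos D_ge].
  set (D := (1 - P x) * t + P x) in *.
  set (q := t / D).
  assert (Hq : q * D = t) by (unfold q; field; lra).
  replace (P x * t / D) with (P x * q) by (unfold q; field; lra).
  assert (0 <= q <= 1) by (split; nra).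
  split; nra.
Qed.

Lemma Derive_ct P t x : 0 <= t -> ex_derive P x -> (1 - P x) * t + P x <> 0 ->
  Derive (ct P t) x = 1 + Derive P x * t ^ 2 / ((1 - P x) * t + P x) ^ 2.
Proof.
  intros Ht HP HD.
  rewrite (Derive_ext (ct P t) (fun x => x + P x * t / ((1 - P x) * t + P x)))
    by (intros; apply ct_nonneg; auto).
  apply is_derive_unique. auto_derive.
  - repeat split; auto.
  - change (Derive (fun y => P y) x) with (Derive P x). field; auto.
Qed.

Lemma Derive_ct_ge P t x : 0 < P x <= 1 -> 0 <= t <= 1 -> ex_derive P x ->
  1 - Rabs (Derive P x) <= Derive (ct P t) x.
Proof.
  intros Hp Ht HP.
  destruct (phi_denom_bounds (P x) t Hp Ht) as [D_pos D_ge].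
  rewrite Derive_ct by (auto; lra).
  set (D := (1 - P x) * t + P x) in *.
  set (d := Derive P x).
  set (q := t ^ 2 / D ^ 2).
  assert (Hq : q * D ^ 2 = t ^ 2) by (unfold q; field; lra).
  replace (d * t ^ 2 / D ^ 2) with (d * q) by (unfold q; field; lra).
  assert (t ^ 2 <= D ^ 2) by (simpl; nra).
  assert (0 < D ^ 2) by (simpl; nra).
  assert (0 <= q <= 1) by (split; nra).
  assert (- Rabs d <= d) by (pose proof (Rle_abs (- d)); rewrite Rabs_Ropp in *; lra).
  pose proof (Rabs_pos d).
  nra.
Qed.

#[local] Hint Resolve open_in_open01 Cn_on_const Cn_on_id Cn_on_plus Cn_on_mult : core.

Lemma smooth_on01_ct P t : 0 <= t <= 1 ->
  (forall n, Cn_on in_open01 n P) -> (forall x, in_open01 x -> 0 < P x <= 1) ->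
  smooth_on01 (ct P t).
Proof.
  intros Ht CP HP n x Hx.
  apply (Cn_on_ex_derive_n in_open01); auto.
  apply (Cn_on_ext in_open01 open_in_open01 n
           (fun y => y + P y * t * / (t + (1 - t) * P y))).
  - intros y Hy. rewrite ct_nonneg by lra. unfold phi, Rdiv.
    do 3 f_equal. ring.
  - apply Cn_on_plus, Cn_on_mult; auto.
    apply Cn_on_inv; auto.
    intros y Hy. destruct (phi_denom_bounds _ _ (HP y Hy) Ht). nra.
Qed.

Theorem lemma8p3 (l : list R) :
  poly_eval l 0 = 0 ->
  poly_eval l 1 = 0 ->
  (forall x, 0 < x < 1 -> 0 < poly_eval l x < Rmin x (1 - x)) ->
  Rbar_lt (sup01 (fun x => Rabs (Derive (poly_eval l) x))) (Finite 1) ->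
  forall t, 0 <= t <= 1 -> classD (ct (poly_eval l) t).
Proof.
  intros _ _ HPmin Hsup t Ht.
  set (P := poly_eval l) in *.
  assert (HP : forall x, in_open01 x -> 0 < P x /\ P x < x /\ P x < 1 - x).
  { intros x Hx. destruct (HPmin x Hx).
    pose proof (Rmin_l x (1 - x)); pose proof (Rmin_r x (1 - x)). lra. }
  assert (HP1 : forall x, in_open01 x -> 0 < P x <= 1).
  { intros x Hx. destruct (HP x Hx) as [? [? ?]], Hx. lra. }
  assert (CP : forall n, Cn_on in_open01 n P) by (intros; apply Cn_on_poly_eval, open_in_open01).
  assert (Hct : forall x, in_open01 x -> x <= ct P t x <= x + P x).
  { intros x Hx. rewrite ct_nonneg by lra.
    destruct (phi_bounds P t x (HP1 x Hx) Ht). lra. }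
  destruct (sup01_lt_bound _ _ Hsup) as [s [Hs1 Hs]].
  assert (Hder : forall x, in_open01 x -> 1 - s <= Derive (ct P t) x).
  { intros x Hx. specialize (Hs x Hx).
    pose proof (Derive_ct_ge P t x (HP1 x Hx) Ht (proj1 (CP 1%nat) x Hx)). lra. }
  split; [split; [| split; [| split]] | split].
  - apply smooth_on01_ct; auto.
  - intros x Hx. destruct (Hct x Hx), (HP x Hx), Hx. lra.
  - apply filterlim_at_left1_of_bounds.
    intros x Hx. destruct (Hct x Hx), (HP x Hx). lra.
  - apply filterlim_at_right0_of_bounds.
    intros x Hx. destruct (Hct x Hx), (HP x Hx), Hx. lra.
  - apply Rbar_lt_le_trans with (Finite (1 - s)); [simpl; lra |].
    apply inf01_ge. exact Hder.
  - assert (Hhalf : in_open01 (/ 2)) by (split; lra).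
    apply Rbar_lt_le_trans with (Finite (Derive (ct P t) (/ 2))).
    + simpl. pose proof (Hder _ Hhalf). lra.
    + apply le_sup01. exact Hhalf.
Qed.
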